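(* Let $m\in\mathcal{S}(\Lambda)$ and $v\in V$. Then $T_vm$ is the unique element of $\mathcal{S}_v(\Lambda)$ with the following property: there exist an open neighborhood $B$ of $v$ in $V$ and an integer $N>0$ such that $T_vm(k,\lambda)=m(k,\lambda)$ for all $(k,\lambda)\in\mathbb{Z}\oplus\Lambda$ with $k>N$ and $\lambda/k\in B$. In particular $T_vm$ does not depend on the decomposition of $m$ used to define it.
   Context: $V$ finite-dimensional real vector space, $\Lambda\subset V$ full-rank lattice, $\Lambda_{\mathbb{Q}}=\Lambda\otimes\mathbb{Q}$. Rational polyhedron: finite intersection of half-spaces $\{v:\langle a,v\rangle\ge c\}$, $a\in\mathrm{Hom}(\Lambda,\mathbb{Z})\otimes\mathbb{Q}$, $c\in\mathbb{Q}$. $C_{P,\sigma}=\{(t,tv+\sigma):t>0,v\in P\}$, $[C_{P,\sigma}]$ its indicator on $\mathbb{Z}\oplus\Lambda$ (zero if $P=\emptyset$). Quasi-polynomials: algebra generated by polynomials and periodic functions. $\mathcal{S}(\Lambda)$: functions of the form $\sum_{P\in\mathcal{P}}\sum_{\sigma\in\Sigma_P}q_{P,\sigma}[C_{P,\sigma}]$ (a decomposition) with $\mathcal{P}$ rational polyhedra, $\Sigma_P\subset\Lambda_{\mathbb{Q}}$, $q_{P,\sigma}$ quasi-polynomial on $\mathbb{Z}\oplus\Lambda$, and $\{P+[0,1]\sigma\}$ locally finite. A cone is a rational polyhedron $w+K$ ($K$ a closed convex polyhedral cone) with apex set $w+(K\cap-K)$. $\mathcal{S}_v(\Lambda)$ is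 the subspace of $\mathcal{S}(\Lambda)$ of functions admitting a finite decomposition $\sum_{P,\sigma}q_{P,\sigma}[C_{P,\sigma}]$ in which each $P$ is a cone whose apex set contains $v$. For a polyhedron $P$, $T_vP$ is the tangent cone of $P$ at $v$ (the closure of $v+\mathbb{R}_{\ge0}(P-v)$) if $v\in P$, and $T_vP=\emptyset$ if $v\notin P$. Given a decomposition of $m$, $T_vm=\sum_{P,\sigma}q_{P,\sigma}[C_{T_vP,\sigma}]$ (a finite sum, since only finitely many $P$ contain $v$). *)

From HB Require Import structures.
From mathcomp Require Import all_boot all_order all_algebra.
From mathcomp Require Import all_classical all_reals all_analysis.
Set Implicit Arguments. Unset Strict Implicit. Unset Printing Implicit Defensive.
Import Order.TTheory GRing.Theory Num.Theory.
Import numFieldNormedType.Exports.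
Local Open Scope classical_set_scope.
Local Open Scope ring_scope.

(* Coordinates: V = R^n (row vectors 'rV[R]_n), Lambda = Z^n ('rV[int]_n),
   Lambda_Q = Q^n ('rV[rat]_n).  Functions on Z (+) Lambda have type
   int * 'rV[int]_n -> F, with values in a number field F. *)

Section Defs.
Variables (R : realType) (F : numFieldType) (n : nat).

Local Notation V := 'rV[R]_n.
Local Notation ZL := (int * 'rV[int]_n)%type.

Definition dotV (a x : V) : R := \sum_(j < n) a 0 j * x 0 j.

Definition embL (l : 'rV[int]_n) : V := map_mx (fun z : int => z%:~R) l.
Definition embQ (s : 'rV[rat]_n) : V := map_mx (fun q : rat => ratr q) s.

(* rational polyhedron: finite intersection of half-spaces <a,v> >= c with
   a in Hom(Lambda,Z) (x) Q = Q^n and c in Q *)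
Definition rational_polyhedron (P : set V) : Prop :=
  exists s : seq ('rV[rat]_n * rat),
    P = [set v : V | forall h, h \in s -> ratr h.2 <= dotV (embQ h.1) v].

Definition polyhedral_cone (K : set V) : Prop :=
  exists s : seq V, K = [set x : V | forall a, a \in s -> 0 <= dotV a x].

(* P is a cone w + K whose apex set w + (K cap -K) contains v *)
Definition cone_with_apex (v : V) (P : set V) : Prop :=
  rational_polyhedron P /\
  exists (w : V) (K : set V), polyhedral_cone K /\
    P = [set w + k | k in K] /\
    [set w + k | k in K `&` [set - x | x in K]] v.

Definition Ccone (P : set V) (sigma : 'rV[rat]_n) : set (R * V) :=
  [set x | exists t (p : V), 0 < t /\ P p /\ x = (t, t *: p + embQ sigma)].

Definition indC (P : set V) (sigma : 'rV[rat]_n) (x : ZL) : F :=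
  \1_(Ccone P sigma) ((x.1)%:~R, embL x.2).

(* periodic functions on Z (+) Lambda (period a finite-index sublattice N(Z+Lambda)) *)
Definition periodic (f : ZL -> F) : Prop :=
  exists N : nat, (0 < N)%N /\
    forall (x y : ZL), f (x.1 + (N%:Z) * y.1, x.2 + y.2 *~ N%:Z) = f x.

Inductive quasi_poly : (ZL -> F) -> Prop :=
| qp_coord0 : quasi_poly (fun x => (x.1)%:~R)
| qp_coord (j : 'I_n) : quasi_poly (fun x => (x.2 0 j)%:~R)
| qp_periodic f : periodic f -> quasi_poly f
| qp_add f g : quasi_poly f -> quasi_poly g -> quasi_poly (fun x => f x + g x)
| qp_mul f g : quasi_poly f -> quasi_poly g -> quasi_poly (fun x => f x * g x).

Definition sweep (P : set V) (sigma : 'rV[rat]_n) : set V :=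
  [set p + t *: embQ sigma | p in P & t in `[0, 1]%classic].

Definition locally_finite (I : Type) (S : I -> set V) : Prop :=
  forall w : V, exists U : set V, nbhs w U /\
    finite_set [set i | S i `&` U !=set0].

Record decomposition (I : choiceType) := Decomp {
  dP : I -> set V;
  dsigma : I -> 'rV[rat]_n;
  dq : I -> ZL -> F
}.

Definition valid_decomposition (I : choiceType) (D : decomposition I) : Prop :=
  (forall i, rational_polyhedron (dP D i)) /\
  (forall i, quasi_poly (dq D i)) /\
  locally_finite (fun i => sweep (dP D i) (dsigma D i)).

Definition decomposes (I : choiceType) (D : decomposition I) (m : ZL -> F) :=
  valid_decomposition D /\
  m = fun x => \sum_(i \in [set: I]) dq D i x * indC (dP D i) (dsigma D i) x.

Definition in_S (m : ZL -> F) : Prop :=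
  exists (I : choiceType) (D : decomposition I), decomposes D m.

Definition in_Sv (v : V) (m : ZL -> F) : Prop :=
  exists (k : nat) (P : 'I_k -> set V) (sigma : 'I_k -> 'rV[rat]_n)
         (q : 'I_k -> ZL -> F),
    (forall i, cone_with_apex v (P i)) /\ (forall i, quasi_poly (q i)) /\
    m = fun x => \sum_(i < k) q i x * indC (P i) (sigma i) x.

Definition tangent_cone (v : V) (P : set V) : set V :=
  [set x | P v /\
     closure [set v + t *: (p - v) | t in [set t : R | 0 <= t] & p in P] x].

Definition Tv (I : choiceType) (D : decomposition I) (v : V) : ZL -> F :=
  fun x => \sum_(i \in [set i | dP D i v])
             dq D i x * indC (tangent_cone v (dP D i)) (dsigma D i) x.

Definition agree_near (v : V) (g m : ZL -> F) : Prop :=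
  exists B : set V, open B /\ B v /\
    exists N : nat, (0 < N)%N /\
      forall (k : int) (l : 'rV[int]_n), (N%:Z < k) ->
        B ((k%:~R)^-1 *: embL l) -> g (k, l) = m (k, l).

End Defs.

(* Near v, a rational polyhedron coincides with its tangent cone at v, and a
   locally finite decomposition has only finitely many pieces meeting a small
   neighbourhood of v. For k large and lambda/k close to v the shifts sigma/k
   are negligible, so T_v m and m agree there; T_v m lies in S_v since tangent
   cones are cones with apex v.
   For uniqueness it suffices that f in S_v vanishing near the ray through v
   vanishes everywhere. Given (k, lambda), pick a rational point z close to v
   lying on all the bounding hyperplanes of the cones of f, and (D, mu) with
   mu = D z integral. Along (k, lambda) + j (D, mu) every indicator is constant,
   because z is an apex of every cone, while the quasi-polynomials are
   polynomial in j on a subprogression. Since (lambda + j mu)/(k + j D) tends to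
   z, this polynomial vanishes for all large j, hence identically, and in
   particular f (k, lambda) = 0. *)

From HB Require Import structures.
From mathcomp Require Import all_boot all_order all_algebra.
From mathcomp Require Import all_classical all_reals all_analysis.
From mathcomp Require Import ring lra.
Set Implicit Arguments. Unset Strict Implicit. Unset Printing Implicit Defensive.
Import Order.TTheory GRing.Theory Num.Theory.
Import numFieldNormedType.Exports.
Local Open Scope classical_set_scope.
Local Open Scope ring_scope.

Lemma near_all_in (T : Type) (F : set_system T) (FF : Filter F) (I : eqType)
    (r : seq I) (P : I -> T -> Prop) :
  (forall i, i \in r -> \forall x \near F, P i x) ->
  \forall x \near F, forall i, i \in r -> P i x.
Proof.
elim: r => [|a r IH] Hr; first exact: nearW.
have Ha := Hr a (mem_head a r).
have {}IH := IH (fun i ir => Hr i (@mem_behead _ (a :: r) _ ir)).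
apply: filterS2 Ha IH => x Pa Pr i; rewrite inE => /orP[/eqP -> | /Pr] //.
Qed.

Lemma eventually_mulnr (Q : nat -> Prop) (M : nat) : (0 < M)%N ->
  (\forall j \near \oo, Q j) -> \forall j \near \oo, Q (j * M)%N.
Proof. by move=> M0 [J _ HJ]; exists J => // j /= Jj; apply/HJ/(leq_trans Jj)/leq_pmulr. Qed.

Section Pairing.
Variables (R : realType) (n : nat).
Local Notation V := 'rV[R]_n.

Lemma dotVDr (a x y : V) : dotV a (x + y) = dotV a x + dotV a y.
Proof. by rewrite /dotV -big_split; apply: eq_bigr => j _; rewrite mxE mulrDr. Qed.

Lemma dotVZr (a x : V) (t : R) : dotV a (t *: x) = t * dotV a x.
Proof. by rewrite /dotV mulr_sumr; apply: eq_bigr => j _; rewrite mxE mulrCA. Qed.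

Lemma dotVNr (a x : V) : dotV a (- x) = - dotV a x.
Proof. by rewrite -scaleN1r dotVZr mulN1r. Qed.

Lemma dotVBr (a x y : V) : dotV a (x - y) = dotV a x - dotV a y.
Proof. by rewrite dotVDr dotVNr. Qed.

Lemma dotV0r (a : V) : dotV a 0 = 0.
Proof. by rewrite -(scale0r 0) dotVZr mul0r. Qed.

Definition l1norm (a : V) : R := \sum_(j < n) `|a 0 j|.

Lemma l1norm_ge0 (a : V) : 0 <= l1norm a.
Proof. exact: sumr_ge0. Qed.

Lemma mx_coord_le_norm (x : V) (j : 'I_n) : `|x 0 j| <= `|x|.
Proof.
rewrite [leRHS]/Num.Def.normr /= mx_normrE; apply/bigmax_geP; right.
by exists (0, j).
Qed.

Lemma dotV_le (a x : V) : `|dotV a x| <= l1norm a * `|x|.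
Proof.
rewrite /dotV /l1norm mulr_suml; apply: le_trans (ler_norm_sum _ _ _) _.
by apply: ler_sum => j _; rewrite normrM ler_wpM2l ?mx_coord_le_norm.
Qed.

Lemma near_dotV (a x : V) (e : R) : 0 < e ->
  \forall y \near x, `|dotV a y - dotV a x| < e.
Proof.
move=> e0; have a0 := l1norm_ge0 a.
apply/nbhs_normP; exists (e / (1 + l1norm a)) => [|y /=]; first by rewrite /= divr_gt0 //; lra.
rewrite ltr_pdivlMr; last by lra.
rewrite -dotVBr distrC => xy; apply: le_lt_trans (dotV_le _ _) _.
by have := normr_ge0 (y - x); nra.
Qed.

Lemma near_dotV_gt (a x : V) (c : R) : c < dotV a x -> \forall y \near x, c < dotV a y.
Proof.
move=> cx; apply: filterS (near_dotV a x (_ : 0 < dotV a x - c)); last by lra.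
by move=> y; rewrite distrC ltr_distlC => /andP[]; lra.
Qed.

Lemma near_dotV_lt (a x : V) (c : R) : dotV a x < c -> \forall y \near x, dotV a y < c.
Proof.
move=> cx; apply: filterS (near_dotV a x (_ : 0 < c - dotV a x)); last by lra.
by move=> y; rewrite distrC ltr_distlC => /andP[]; lra.
Qed.

End Pairing.

Section Polyhedra.
Variables (R : realType) (n : nat).
Local Notation V := 'rV[R]_n.
Local Notation constraint := ('rV[rat]_n * rat)%type.

Definition hpoly (s : seq constraint) : set V :=
  [set x | forall h, h \in s -> ratr h.2 <= dotV (embQ R h.1) x].

Definition active (s : seq constraint) (v : V) : seq constraint :=
  [seq h <- s | dotV (embQ R h.1) v == ratr h.2].

Definition tight (s : seq constraint) (v : V) : Prop :=
  forall h, h \in s -> dotV (embQ R h.1) v = ratr h.2.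

Lemma hpoly_active s v : hpoly s `<=` hpoly (active s v).
Proof. by move=> x Px h; rewrite mem_filter => /andP[_ /Px]. Qed.

Lemma active_tight s v : tight (active s v) v.
Proof. by move=> h; rewrite mem_filter => /andP[/eqP]. Qed.

Lemma tight_hpoly_cone s v x t : tight s v -> hpoly s x -> 0 <= t ->
  hpoly s (v + t *: (x - v)).
Proof.
move=> Tv Px t0 h hs; rewrite dotVDr dotVZr dotVBr Tv // lerDl.
by rewrite mulr_ge0 // subr_ge0 Px.
Qed.

Lemma near_hpoly_active s v : hpoly s v ->
  \forall y \near v, hpoly (active s v) y -> hpoly s y.
Proof.
move=> Pv; have inactive_near h : h \in s ->
    \forall y \near v, ratr h.2 < dotV (embQ R h.1) v -> ratr h.2 < dotV (embQ R h.1) y.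
  move=> _; have [/near_dotV_gt|] := ltrP (ratr h.2) (dotV (embQ R h.1) v).
    exact: filterS.
  by move=> _; apply: (@nearW _ (nbhs v)).
apply: filterS (near_all_in _ inactive_near) => y Hy Ay h hs.
have [Ev|] := eqVneq (dotV (embQ R h.1) v) (ratr h.2).
  by apply: Ay; rewrite mem_filter Ev eqxx.
by rewrite neq_lt ltNge Pv //= => /(Hy h hs)/ltW.
Qed.

Lemma active_scale s v x : hpoly s v -> hpoly (active s v) x ->
  exists2 e : R, 0 < e & hpoly s (v + e *: (x - v)).
Proof.
move=> Pv Ax; have /nbhs_normP[d /= d0 Hd] := near_hpoly_active Pv.
have x0 := normr_ge0 (x - v).
have e0 : 0 < d / (1 + `|x - v|) by rewrite divr_gt0 //; lra.
exists (d / (1 + `|x - v|)) => //; apply: Hd.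
  rewrite /= opprD addNKr normrN normrZ gtr0_norm // mulrC mulrA ltr_pdivrMr; last by lra.
  by nra.
exact: tight_hpoly_cone (@active_tight s v) Ax (ltW e0).
Qed.

Lemma hpoly_active_eq s v : hpoly s v ->
  (forall x t, hpoly s x -> 0 <= t -> hpoly s (v + t *: (x - v))) ->
  hpoly s = hpoly (active s v).
Proof.
move=> Pv Hcone; apply/seteqP; split; first exact: hpoly_active.
move=> x Ax; have [e e0 Pe] := active_scale Pv Ax.
have := Hcone _ e^-1 Pe; rewrite invr_ge0 ltW // => /(_ isT).
by rewrite addrAC subrr add0r scalerA mulVf ?gt_eqF // scale1r addrCA subrr addr0.
Qed.

Lemma tangent_cone_hpoly s v : hpoly s v ->
  tangent_cone v (hpoly s) = hpoly (active s v).
Proof.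
move=> Pv; apply/seteqP; split.
  move=> x [_ Cx] h ha; rewrite leNgt; apply/negP => /near_dotV_lt/Cx.
  move=> [_ [[t /= t0 [p Pp <-]] ]]; apply/negP; rewrite -leNgt.
  rewrite dotVDr dotVZr dotVBr (active_tight ha) lerDl mulr_ge0 // subr_ge0.
  by apply: Pp; move: ha; rewrite mem_filter => /andP[].
move=> x Ax; split => //; have [e e0 Pe] := active_scale Pv Ax.
apply: subset_closure; exists e^-1; first by rewrite /= invr_ge0 ltW.
exists (v + e *: (x - v)) => //.
by rewrite addrAC subrr add0r scalerA mulVf ?gt_eqF // scale1r addrCA subrr addr0.
Qed.

Lemma tangent_cone_notin (P : set V) v x : ~ P v -> ~ tangent_cone v P x.
Proof. by move=> Pv []. Qed.

Lemma near_tangent_cone (P : set V) v : rational_polyhedron P ->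
  \forall y \near v, P y <-> tangent_cone v P y.
Proof.
move=> [s ->]; have [Pv|Pv] := pselect (hpoly s v).
  rewrite tangent_cone_hpoly //; apply: filterS (near_hpoly_active Pv) => y Hy.
  by split; [exact: hpoly_active | exact: Hy].
have [h hs vh] : exists2 h, h \in s & dotV (embQ R h.1) v < ratr h.2.
  have [/allP Hall|/allPn[h hs]] := boolP (all (fun h => ratr h.2 <= dotV (embQ R h.1) v) s).
    by exfalso; apply: Pv => h /Hall.
  by rewrite -ltNge; exists h.
apply: filterS (near_dotV_lt vh) => y yh; split=> [Py|/tangent_cone_notin//].
by have := Py h hs; rewrite leNgt yh.
Qed.

Lemma tight_cone_with_apex s v : tight s v -> cone_with_apex v (hpoly s).
Proof.
move=> Tv; split; first by exists s.
pose K := [set y : V | forall a, a \in [seq embQ R h.1 | h <- s] -> 0 <= dotV a y].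
exists v, K; split; first by exists [seq embQ R h.1 | h <- s].
split.
  apply/seteqP; split=> [x Px|x [k Kk <-] h hs].
    exists (x - v); last by rewrite addrC subrK.
    by move=> a /mapP[h hs ->]; rewrite dotVBr Tv // subr_ge0 Px.
  by rewrite dotVDr Tv // lerDl Kk //; apply/mapP; exists h.
exists 0; last by rewrite addr0.
split; first by move=> a _; rewrite dotV0r.
by exists 0; rewrite ?oppr0 // => a _; rewrite dotV0r.
Qed.

Lemma cone_with_apex_tight v (P : set V) : cone_with_apex v P ->
  exists2 s, P = hpoly s & tight s v.
Proof.
move=> [[s0 Ps0] [w [K [[sa HK] [PK [k0 [Kk0 [x1 Kx1 Ex1]] Ev]]]]]].
have Kadd y z t : K y -> K z -> 0 <= t -> K (y + t *: z).
  rewrite HK => Ky Kz t0 a aS; rewrite dotVDr dotVZr.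
  by rewrite addr_ge0 ?mulr_ge0 ?Ky ?Kz.
have Ps : P = hpoly s0 := Ps0.
(* [v = w + k0] with [k0] in the lineality space of [K], so [P] is stable
   under dilations centred at [v]. *)
have Pv : P v by rewrite PK; exists k0.
exists (active s0 v); last exact: active_tight.
rewrite Ps; apply: hpoly_active_eq; rewrite -Ps // => y t.
rewrite PK => -[k1 Kk1 <-] t0.
exists (k0 + t *: (k1 + x1)).
  by apply: (Kadd) => //; rewrite -[x1]scale1r; apply: (Kadd).
rewrite -Ev -Ex1 addrA; congr (_ + _); congr (_ *: _).
by rewrite opprD opprK addrA [w + k1]addrC addrK.
Qed.

Lemma tangent_cone_with_apex (P : set V) v : rational_polyhedron P -> P v ->
  cone_with_apex v (tangent_cone v P).
Proof.
move=> [s ->] Pv; rewrite tangent_cone_hpoly //.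
exact/tight_cone_with_apex/active_tight.
Qed.

End Polyhedra.

Arguments hpoly R {n} s _.

Section Indicator.
Variables (R : realType) (F : numFieldType) (n : nat).
Local Notation V := 'rV[R]_n.

Lemma indCE (P : set V) s (k : int) (l : 'rV[int]_n) : 0 < k ->
  indC F P s (k, l) = if `[< P (k%:~R^-1 *: (embL R l - embQ R s)) >] then 1 else 0.
Proof.
move=> k0; have k0' : (k%:~R : R) != 0 by rewrite intr_eq0 gt_eqF.
rewrite /indC indicE /=; case: asboolP => [Py|NPy].
  rewrite mem_set //; exists k%:~R, (k%:~R^-1 *: (embL R l - embQ R s)).
  by rewrite ltr0z scalerA divff // scale1r subrK.
rewrite memNset // => -[t [p [t0 [Pp [tk lE]]]]]; apply: NPy.
by rewrite lE tk addrK scalerA mulVf ?scale1r // gt_eqF.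
Qed.

Lemma indC_le0 (P : set V) s (k : int) (l : 'rV[int]_n) : k <= 0 ->
  indC F P s (k, l) = 0.
Proof.
move=> k0; rewrite /indC indicE memNset // => -[t [p [t0 [_ [tk _]]]]].
by move: t0; rewrite -tk ltNge lerz0 k0.
Qed.

Lemma indC_tangent_notin (P : set V) v s x : ~ P v ->
  indC F (tangent_cone v P) s x = 0.
Proof.
move=> Pv; rewrite /indC indicE memNset // => -[t [p [_ [+ _]]]].
exact: tangent_cone_notin.
Qed.

Lemma indC_notin_sweep (P : set V) s (k : int) (l : 'rV[int]_n) : 0 < k ->
  ~ sweep P s (k%:~R^-1 *: embL R l) -> indC F P s (k, l) = 0.
Proof.
move=> k0 NS; rewrite indCE //; case: asboolP => // Py; exfalso; apply: NS.
have k1 : (1 : R) <= k%:~R by rewrite ler1z.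
exists (k%:~R^-1 *: (embL R l - embQ R s)) => //; exists k%:~R^-1.
  by rewrite /= in_itv /= invr_ge0 (le_trans ler01 k1) invf_le1 // (lt_le_trans ltr01).
by rewrite -scalerDr subrK.
Qed.

Lemma indC_near (P Q : set V) s (v : V) (d : R) (k : int) (l : 'rV[int]_n) :
  0 < k -> (forall y, `|y - v| < d -> P y <-> Q y) ->
  `|k%:~R^-1 *: (embL R l - embQ R s) - v| < d ->
  indC F P s (k, l) = indC F Q s (k, l).
Proof. by move=> k0 PQ yv; rewrite !indCE // (asbool_equiv_eq (PQ _ yv)). Qed.

End Indicator.

Section RationalApproximation.
Variables (R : realType) (n : nat).
Local Notation V := 'rV[R]_n.
Local Notation constraint := ('rV[rat]_n * rat)%type.

Lemma embQD (z1 z2 : 'rV[rat]_n) : embQ R (z1 + z2) = embQ R z1 + embQ R z2.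
Proof. by apply/matrixP => i j; rewrite !mxE rmorphD. Qed.

Lemma embQB (z1 z2 : 'rV[rat]_n) : embQ R (z1 - z2) = embQ R z1 - embQ R z2.
Proof. by apply/matrixP => i j; rewrite !mxE rmorphB. Qed.

Lemma embQZ t (z : 'rV[rat]_n) : embQ R (t *: z) = ratr t *: embQ R z.
Proof. by apply/matrixP => i j; rewrite !mxE rmorphM. Qed.

Definition dotQ (a z : 'rV[rat]_n) : rat := \sum_(j < n) a 0 j * z 0 j.

Lemma ratr_dotQ a z : ratr (dotQ a z) = dotV (embQ R a) (embQ R z).
Proof. by rewrite rmorph_sum; apply: eq_bigr => j _; rewrite rmorphM !mxE. Qed.

Definition rat_approx (s : seq constraint) (v : V) : Prop :=
  forall e, 0 < e -> exists z : 'rV[rat]_n, tight s (embQ R z) /\ `|embQ R z - v| < e.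

Lemma rat_approx_nil v : rat_approx [::] v.
Proof.
move=> e e0; have approx j : exists q : rat, `|ratr q - v 0 j| < e.
  have nb : ball (v 0 j) e !=set0 by exists (v 0 j); exact: ballxx.
  have [x [Be [q _ qx]]] := dense_rat nb (ball_open _ _).
  by exists q; rewrite qx distrC; move: Be; rewrite -ball_normE.
have [f Hf] := choice approx.
exists (\row_j f j); split=> //.
rewrite [ltLHS]/Num.Def.normr /= mx_normrE; apply: bigmax_lt => // -[i j] _ /=.
by rewrite (ord1 i) !mxE.
Qed.

Lemma rat_approx_cons_transversal s a c v (d : 'rV[rat]_n) :
  rat_approx s v -> dotV (embQ R a) v = ratr c ->
  (forall h, h \in s -> dotV (embQ R h.1) (embQ R d) = 0) ->
  dotV (embQ R a) (embQ R d) != 0 ->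
  rat_approx ((a, c) :: s) v.
Proof.
move=> Hs av Hd ad0 e e0; set ad := dotV (embQ R a) (embQ R d) in ad0.
pose K := l1norm (embQ R a) * `|embQ R d| / `|ad|.
have K0 : 0 <= K by rewrite divr_ge0 ?mulr_ge0 ?l1norm_ge0.
have [z [Tz zv]] := Hs (e / (1 + K)) (divr_gt0 e0 (ltr_pwDl ltr01 K0)).
pose t : rat := (c - dotQ a z) / dotQ a d.
have rt : ratr t = (ratr c - dotV (embQ R a) (embQ R z)) / ad :> R.
  by rewrite fmorph_div /= rmorphB /= !ratr_dotQ.
exists (z + t *: d); split.
  move=> h; rewrite inE => /orP[/eqP -> | hs] /=.
    by rewrite embQD embQZ dotVDr dotVZr rt mulfVK //; ring.
  by rewrite embQD embQZ dotVDr dotVZr Tz // Hd // mulr0 addr0.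
rewrite embQD embQZ addrAC; apply: le_lt_trans (ler_normD _ _) _.
set u := `|embQ R z - v|; have u0 : 0 <= u by exact: normr_ge0.
have tdK : `|ratr t : R| * `|embQ R d| <= K * u.
  rewrite rt normrM normfV -av -dotVBr /K mulrAC [leRHS]mulrAC.
  rewrite ler_pM2r ?invr_gt0 ?normr_gt0 // [leRHS]mulrAC ler_wpM2r //.
  by apply: le_trans (dotV_le _ _) _; rewrite /u distrC.
have uKe : u * (1 + K) < e by rewrite -ltr_pdivlMr // ltr_pwDl.
by rewrite normrZ; nra.
Qed.

Lemma rat_approx_cons_dependent s a c v :
  rat_approx s v -> dotV (embQ R a) v = ratr c ->
  (forall d, (forall h, h \in s -> dotV (embQ R h.1) (embQ R d) = 0) ->
     dotV (embQ R a) (embQ R d) = 0) ->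
  rat_approx ((a, c) :: s) v.
Proof.
move=> Hs av Hdep e e0; have [z [Tz zv]] := Hs e e0; exists z; split=> // h.
rewrite inE => /orP[/eqP -> /= | /Tz //]; apply/eqP; apply: contraT => Hne.
have g0 : 0 < `|dotV (embQ R a) (embQ R z) - ratr c| by rewrite normr_gt0 subr_eq0.
have /nbhs_normP[r /= r0 Hr] := near_dotV (embQ R a) v g0.
have [z2 [Tz2 z2v]] := Hs r r0.
(* [a . z = a . z2] for every rational solution [z2] of [s], and these approach
   [a . v = c]. *)
have E : dotV (embQ R a) (embQ R z) = dotV (embQ R a) (embQ R z2).
  apply/eqP; rewrite -subr_eq0 -dotVBr -embQB Hdep // => b bs.
  by rewrite embQB dotVBr Tz // Tz2 // subrr.
by have := Hr (embQ R z2); rewrite /= distrC -E av ltxx => /(_ z2v).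
Qed.

Lemma tight_rat_approx s v : tight s v -> rat_approx s v.
Proof.
elim: s => [|[a c] s IH] Tv; first exact: rat_approx_nil.
have Hs := IH (fun h hs => Tv h (@mem_behead _ ((a, c) :: s) _ hs)).
have av := Tv (a, c) (mem_head _ _).
have [[d [Hd ad]]|Hno] := pselect (exists d, (forall h, h \in s ->
    dotV (embQ R h.1) (embQ R d) = 0) /\ dotV (embQ R a) (embQ R d) != 0).
  exact: rat_approx_cons_transversal Hd ad.
apply: rat_approx_cons_dependent => // d Hd; apply/eqP.
by apply: contra_notT Hno => ad; exists d.
Qed.

End RationalApproximation.

Section QuasiPolynomials.
Variables (F : numFieldType) (n : nat).
Local Notation ZL := (int * 'rV[int]_n)%type.

Definition progression (x w : ZL) (j : nat) : ZL :=
  (x.1 + j%:Z * w.1, x.2 + w.2 *~ j%:Z).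

Lemma progression0 x w : progression x w 0 = x.
Proof. by rewrite /progression mul0r mulr0z !addr0; case: x. Qed.

(* Periodic factors are constant only along multiples of their period, hence
   the step [M]. *)
Definition poly_along (f : ZL -> F) (x w : ZL) (M : nat) : Prop :=
  exists p : {poly F}, forall j : nat, f (progression x w (j * M)) = p.[j%:R].

Lemma poly_alongMr f x w M b : poly_along f x w M -> poly_along f x w (M * b).
Proof.
move=> [p Hp]; exists (p \Po (b%:R *: 'X)) => j.
by rewrite horner_comp hornerZ hornerX -natrM -Hp (mulnC b j) -mulnA (mulnC M b).
Qed.

Lemma poly_alongD f g x w M1 M2 : poly_along f x w M1 -> poly_along g x w M2 ->
  poly_along (fun y => f y + g y) x w (M1 * M2).
Proof.
move=> /(poly_alongMr M2)[p Hp] /(poly_alongMr M1)[q Hq].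
by exists (p + q) => j; rewrite hornerD -Hp -Hq [(M2 * M1)%N]mulnC.
Qed.

Lemma poly_alongM f g x w M1 M2 : poly_along f x w M1 -> poly_along g x w M2 ->
  poly_along (fun y => f y * g y) x w (M1 * M2).
Proof.
move=> /(poly_alongMr M2)[p Hp] /(poly_alongMr M1)[q Hq].
by exists (p * q) => j; rewrite hornerM -Hp -Hq [(M2 * M1)%N]mulnC.
Qed.

Lemma poly_along_cst f x w M : (forall j, f (progression x w j) = f x) ->
  poly_along f x w M.
Proof. by move=> Hf; exists (f x)%:P => j; rewrite hornerC Hf. Qed.

Lemma poly_along_sum (I : Type) (r : seq I) (f : I -> ZL -> F) (M : I -> nat) x w :
  (forall i, poly_along (f i) x w (M i)) ->
  poly_along (fun y => \sum_(i <- r) f i y) x w (\prod_(i <- r) M i).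
Proof.
move=> Hf; elim: r => [|a r IH].
  by exists 0 => j; rewrite !big_nil horner0.
have [p Hp] := poly_alongD (Hf a) IH.
by exists p => j; rewrite !big_cons -Hp.
Qed.

Lemma quasi_poly_along f : quasi_poly f ->
  exists2 M, (0 < M)%N & forall x w, poly_along f x w M.
Proof.
elim=> {f}.
- exists 1%N => // x w; exists ((x.1)%:~R%:P + (w.1)%:~R%:P * 'X) => j.
  by rewrite /progression /= muln1 hornerD hornerM !hornerC hornerX intrD intrM mulrC.
- move=> i; exists 1%N => // x w.
  exists ((x.2 0 i)%:~R%:P + (w.2 0 i)%:~R%:P * 'X) => j.
  rewrite /progression /= muln1 hornerD hornerM !hornerC hornerX mxE -!pmulrn mulmxnE intrD.
  by rewrite rmorphMn mulr_natr.
- move=> f [N [N0 Hf]]; exists N => // x w; exists (f x)%:P => j.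
  rewrite hornerC -[RHS](Hf x (j%:Z * w.1, w.2 *~ j%:Z)) /progression /=.
  by rewrite mulrA [N%:Z * _]mulrC -PoszM -mulrzA -PoszM mulnC.
- move=> f g _ [M1 M10 H1] _ [M2 M20 H2].
  by exists (M1 * M2)%N => [|x w]; [rewrite muln_gt0 M10 | exact: poly_alongD].
- move=> f g _ [M1 M10 H1] _ [M2 M20 H2].
  by exists (M1 * M2)%N => [|x w]; [rewrite muln_gt0 M10 | exact: poly_alongM].
Qed.

Lemma poly_eventually_zero (p : {poly F}) :
  (\forall j \near \oo, p.[j%:R] = 0) -> p = 0.
Proof.
move=> [J _ HJ]; apply/eqP; apply: contraT => p0.
have := @max_poly_roots _ p [seq (J + i)%:R | i <- iota 0 (size p)] p0.
rewrite size_map size_iota ltnn; apply.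
  by apply/allP => _ /mapP[i _ ->]; apply/rootP/HJ/leq_addr.
by rewrite map_inj_uniq ?iota_uniq // => i1 i2 /eqP; rewrite eqr_nat eqn_add2l => /eqP.
Qed.

End QuasiPolynomials.

Section LatticeRays.
Variables (R : realType) (F : numFieldType) (n : nat).
Local Notation V := 'rV[R]_n.

Lemma embLD (l1 l2 : 'rV[int]_n) : embL R (l1 + l2) = embL R l1 + embL R l2.
Proof. by apply/matrixP => i j; rewrite !mxE rmorphD. Qed.

Lemma embLz (l : 'rV[int]_n) (c : int) : embL R (l *~ c) = c%:~R *: embL R l.
Proof.
apply/matrixP => i j; rewrite !mxE.
case: c => c; first by rewrite -!pmulrn mulmxnE rmorphMn mulr_natl.
by rewrite !NegzE !mulrNz mxE -!pmulrn mulmxnE rmorphN rmorphMn mulNr mulr_natl.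
Qed.

Lemma embQ_int_multiple (z : 'rV[rat]_n) :
  exists D : int, exists2 mu : 'rV[int]_n, 0 < D & embL R mu = D%:~R *: embQ R z.
Proof.
exists (\prod_(j < n) denq (z 0 j)).
exists (\row_j (numq (z 0 j) * \prod_(j' < n | j' != j) denq (z 0 j'))).
  by apply: prodr_gt0 => j _; exact: denq_gt0.
apply/matrixP => i j; rewrite !mxE [in RHS](bigD1 j) //= (ord1 i) !intrM.
have -> : (numq (z 0 j))%:~R = ratr (z 0 j) * (denq (z 0 j))%:~R :> R.
  by have := congr1 (@ratr R) (numqE (z 0 j)); rewrite ratr_int rmorphM /= ratr_int.
by ring.
Qed.

Lemma hpoly_scale s (t : R) (y : V) : 0 < t ->
  hpoly R s (t^-1 *: y) <-> (forall h, h \in s -> t * ratr h.2 <= dotV (embQ R h.1) y).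
Proof. by move=> t0; split=> H h hs; have := H h hs; rewrite dotVZr ler_pdivlMl. Qed.

Lemma indC_hpoly_progression s (sg z : 'rV[rat]_n) (D : int) mu (k : int) l j :
  tight s (embQ R z) -> embL R mu = D%:~R *: embQ R z -> 0 < D -> 0 < k ->
  indC F (hpoly R s) sg (progression (k, l) (D, mu) j) = indC F (hpoly R s) sg (k, l).
Proof.
move=> Tz Hmu D0 k0.
have kj0 : 0 < k + j%:Z * D by rewrite ltr_wpDr // mulr_ge0 // ltW.
rewrite /progression /= !indCE //; congr (if _ then _ else _); apply: asbool_equiv_eq.
have shift h : h \in s -> dotV (embQ R h.1) (embL R (l + mu *~ j) - embQ R sg) =
    dotV (embQ R h.1) (embL R l - embQ R sg) + (j%:Z * D)%:~R * ratr h.2.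
  move=> hs; rewrite embLD embLz Hmu scalerA !dotVBr dotVDr dotVZr Tz // intrM; ring.
rewrite !hpoly_scale ?ltr0z //.
by split=> H h hs; have := H h hs; rewrite ?shift // intrD mulrDl; lra.
Qed.

Lemma progression_near_ray (z : V) (D : int) mu (k : int) l (e : R) :
  embL R mu = D%:~R *: z -> 0 < D -> 0 < k -> 0 < e ->
  \forall j \near \oo,
    `|(k + j%:Z * D)%:~R^-1 *: embL R (l + mu *~ j%:Z) - z| < e.
Proof.
move=> Hmu D0 k0 e0; pose C := `|embL R l - k%:~R *: z|.
exists (Num.trunc (C / e)).+1 => // j /= Jj.
have jK : (j%:R : R) <= (k + j%:Z * D)%:~R.
  by rewrite -[j%:R]/((j%:Z)%:~R) ler_int (ler_wpDl (ltW k0)) // ler_peMr.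
have K0 : (0 : R) < (k + j%:Z * D)%:~R by rewrite ltr0z ltr_wpDr // mulr_ge0 // ltW.
have -> : (k + j%:Z * D)%:~R^-1 *: embL R (l + mu *~ j%:Z) - z =
    (k + j%:Z * D)%:~R^-1 *: (embL R l - k%:~R *: z).
  apply/matrixP => a b; rewrite embLD embLz Hmu scalerA !mxE intrD intrM.
  by field; move: K0; rewrite intrD intrM => /gt_eqF ->.
rewrite normrZ gtr0_norm ?invr_gt0 // -/C mulrC ltr_pdivrMr //.
have := truncnS_gt (C / e); rewrite ltr_pdivrMr // => Ce.
have : ((Num.trunc (C / e)).+1%:R : R) <= j%:R by rewrite ler_nat.
by have := normr_ge0 (embL R l - k%:~R *: z); nra.
Qed.

Lemma near_progression (B : set V) (z : V) (D : int) mu (k : int) l (N : nat) :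
  nbhs z B -> embL R mu = D%:~R *: z -> 0 < D -> 0 < k ->
  \forall j \near \oo, N%:Z < k + j%:Z * D /\
    B ((k + j%:Z * D)%:~R^-1 *: embL R (l + mu *~ j%:Z)).
Proof.
move=> /nbhs_normP[e /= e0 Be] Hmu D0 k0.
have large : \forall j \near \oo, N%:Z < k + j%:Z * D.
  exists N => // j /= Nj; apply: (@lt_le_trans _ _ (k + N%:Z)); first by rewrite ltr_pwDl.
  by rewrite lerD2l (le_trans _ (ler_peMr _ _)) ?lez_nat.
apply: filterS2 large (progression_near_ray l Hmu D0 k0 e0) => j Nj near.
by split=> //; apply: Be; rewrite /= distrC.
Qed.

Lemma near_shift_small (s : 'rV[rat]_n) (e : R) : 0 < e ->
  \forall N \near \oo, forall k : int, N%:Z < k -> `|k%:~R^-1 *: embQ R s| < e.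
Proof.
move=> e0; exists (Num.trunc (e^-1 * `|embQ R s|)) => // N /= sN k Nk.
have k0 : (0 : R) < k%:~R by rewrite ltr0z (le_lt_trans _ Nk).
rewrite normrZ gtr0_norm ?invr_gt0 // [_^-1 * _]mulrC ltr_pdivrMr // -ltr_pdivrMl //.
apply: lt_le_trans (truncnS_gt _) _.
rewrite -[_.+1%:R]/((_.+1%:Z)%:~R) ler_int -addn1 PoszD lezD1.
by apply: le_lt_trans Nk; rewrite lez_nat.
Qed.

End LatticeRays.

Section Uniqueness.
Variables (R : realType) (F : numFieldType) (n : nat).
Local Notation V := 'rV[R]_n.
Local Notation ZL := (int * 'rV[int]_n)%type.

Lemma in_Sv_sub (v : V) (g h : ZL -> F) : in_Sv v g -> in_Sv v h ->
  in_Sv v (fun x => g x - h x).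
Proof.
move=> [k1 [P1 [s1 [q1 [HP1 [Hq1 ->]]]]]] [k2 [P2 [s2 [q2 [HP2 [Hq2 ->]]]]]].
pose pick T (f1 : 'I_k1 -> T) (f2 : 'I_k2 -> T) (i : 'I_(k1 + k2)) :=
  match fintype.split i with inl a => f1 a | inr b => f2 b end.
have pickl T f1 f2 a : pick T f1 f2 (lshift k2 a) = f1 a by rewrite /pick (unsplitK (inl a)).
have pickr T f1 f2 b : pick T f1 f2 (rshift k1 b) = f2 b by rewrite /pick (unsplitK (inr b)).
exists (k1 + k2)%N, (pick _ P1 P2), (pick _ s1 s2),
  (pick _ q1 (fun b x => -1 * q2 b x)); split; last split.
- by move=> i; rewrite /pick; case: fintype.split.
- move=> i; rewrite /pick; case: fintype.split => // b.
  by apply: qp_mul => //; apply: qp_periodic; exists 1%N.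
- apply/funext => x; rewrite big_split_ord -sumrN; congr (_ + _).
    by apply: eq_bigr => a _; rewrite !pickl.
  by apply: eq_bigr => b _; rewrite !pickr mulN1r mulNr.
Qed.

Lemma agree_near_sub (v : V) (g h m : ZL -> F) :
  agree_near v g m -> agree_near v h m -> agree_near v (fun x => g x - h x) (fun _ => 0).
Proof.
move=> [B1 [oB1 [B1v [N1 [N10 H1]]]]] [B2 [oB2 [B2v [N2 [_ H2]]]]].
exists (B1 `&` B2); split; first exact: openI.
split=> //; exists (maxn N1 N2); split; first by rewrite leq_max N10.
move=> k l Nk [B1k B2k]; rewrite H1 ?H2 ?subrr //; apply: le_lt_trans Nk.
  by rewrite lez_nat leq_maxr.
by rewrite lez_nat leq_maxl.
Qed.

Lemma cones_rational_apex (v : V) k (P : 'I_k -> set V) (B : set V) :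
  (forall i, cone_with_apex v (P i)) -> nbhs v B ->
  exists2 z : 'rV[rat]_n, B (embQ R z) &
    forall i, exists2 s, P i = hpoly R s & tight s (embQ R z).
Proof.
move=> HP /nbhs_normP[r /= r0 Br].
have /choice[s Hs] : forall i, exists s, P i = hpoly R s /\ tight s v.
  by move=> i; have [s] := cone_with_apex_tight (HP i); exists s.
pose A := flatten [seq s i | i <- enum 'I_k].
have sA i : {subset s i <= A}.
  by move=> h hs; apply/flattenP; exists (s i) => //; apply/map_f; rewrite mem_enum.
have TA : tight A v by move=> h /flattenP[_ /mapP[i _ ->] hs]; exact: (Hs i).2.
have [z [Tz zv]] := tight_rat_approx TA r0.
exists z; first by apply: Br; rewrite /= distrC.
by move=> i; exists (s i) => [|h /sA /Tz]; first exact: (Hs i).1.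
Qed.

Lemma Sv_vanish (v : V) (f : ZL -> F) :
  in_Sv v f -> agree_near v f (fun _ => 0) -> f = fun _ => 0.
Proof.
move=> [k [P [sg [q [HP [Hq ->]]]]]] [B [oB [Bv [N [_ HB]]]]].
apply/funext => -[kk l]; have [k0|k0] := leP kk 0.
  by rewrite big1 // => i _; rewrite indC_le0 // mulr0.
have [z Bz Hz] := cones_rational_apex HP (open_nbhs_nbhs (conj oB Bv)).
have [D [mu D0 Hmu]] := embQ_int_multiple R z.
have /choice[M HM] : forall i, exists M, (0 < M)%N /\ forall x w, poly_along (q i) x w M.
  by move=> i; have [M] := quasi_poly_along (Hq i); exists M.
pose Mall := (\prod_(i < k) (M i * 1))%N.
have Mall0 : (0 < Mall)%N by rewrite prodn_gt0 // => i; rewrite muln1; case: (HM i).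
have [p Hp] : poly_along (fun x => \sum_(i < k) q i x * indC F (P i) (sg i) x)
    (kk, l) (D, mu) Mall.
  apply: poly_along_sum => i; apply: poly_alongM; first exact: (HM i).2.
  have [s -> Ts] := Hz i; apply: poly_along_cst => j.
  exact: indC_hpoly_progression Ts Hmu D0 k0.
suff p0 : p = 0 by have := Hp 0%N; rewrite mul0n progression0 p0 horner0; apply.
have Bz' : nbhs (embQ R z) B by exact: open_nbhs_nbhs.
apply: poly_eventually_zero.
apply: filterS (eventually_mulnr Mall0 (near_progression l N Bz' Hmu D0 k0)).
by move=> j [Nj Bj]; rewrite -Hp; apply: HB.
Qed.

End Uniqueness.

Section Localization.
Variables (R : realType) (F : numFieldType) (n : nat).
Variables (I : choiceType) (D : decomposition R F n I) (m : int * 'rV[int]_n -> F).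
Variable v : 'rV[R]_n.
Hypothesis HD : decomposes D m.

Let meets (U : set 'rV[R]_n) := [set i | sweep (dP D i) (dsigma D i) `&` U !=set0].

Lemma decomposition_locally_finite_at :
  exists U, [/\ nbhs v U, finite_set (meets U) & [set i | dP D i v] `<=` meets U].
Proof.
have [[_ [_ /(_ v)[U [vU fU]]]] _] := HD; exists U; split=> // i Pv.
exists v; split; last exact: nbhs_singleton.
exists v => //; exists 0; last by rewrite scale0r addr0.
by rewrite /= in_itv /= lexx ler01.
Qed.

Lemma Tv_in_Sv : in_Sv v (Tv D v).
Proof.
have [U [_ fU SU]] := decomposition_locally_finite_at.
have fS : finite_set [set i | dP D i v] := sub_finite_set SU fU.
pose r := finmap.enum_fset (fset_set [set i | dP D i v]).
pose t := tnth (in_tuple r).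
have tS j : dP D (t j) v by have := mem_tnth j (in_tuple r); rewrite in_fset_set // inE.
have [[HP [Hq _]] _] := HD.
exists (size r), (fun j => tangent_cone v (dP D (t j))), (fun j => dsigma D (t j)),
  (fun j => dq D (t j)); split; last split.
- by move=> j; apply: tangent_cone_with_apex.
- by move=> j; exact: Hq.
- by apply/funext => x; rewrite /Tv fsbig_finite // (big_tnth _ _ r xpredT).
Qed.

Lemma Tv_agree_near : agree_near v (Tv D v) m.
Proof.
have [U [vU fU SU]] := decomposition_locally_finite_at.
have [[HP _] Hm] := HD.
pose r := finmap.enum_fset (fset_set (meets U)).
have rU i : (i \in r) = (i \in meets U) by rewrite in_fset_set.
have /nbhs_normP[rho /= rho0 Hrho] : \forall y \near v, U y /\
    forall i, i \in r -> (dP D i y <-> tangent_cone v (dP D i) y).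
  apply: filterS2 vU (near_all_in (r := r) _ (fun i _ => near_tangent_cone v (HP i))).
  by move=> y; split.
have [N _ HN] : \forall N \near \oo, forall i, i \in r -> forall k : int,
    N%:Z < k -> `|k%:~R^-1 *: embQ R (dsigma D i)| < rho / 2.
  by apply: near_all_in => i _; apply: near_shift_small; rewrite divr_gt0.
exists (ball v (rho / 2)); split; first exact: ball_open.
split; first exact/ballxx/divr_gt0.
exists N.+1; split=> // k l Nk; rewrite -ball_normE /= => y0v.
have k0 : 0 < k by apply: le_lt_trans Nk.
have NK : N%:Z < k by apply: le_lt_trans Nk; rewrite lez_nat.
have y0v' : `|v - k%:~R^-1 *: embL R l| < rho by lra.
have [Uy0 _] := Hrho _ y0v'.
rewrite Hm /Tv (fsbig_widen _ _ _ SU) => [|i [_ Si]]; last first.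
  by rewrite /= indC_tangent_notin ?mulr0.
rewrite -(fsbig_widen (meets U) setT) //; last first.
  move=> i [_ Ji]; rewrite /= indC_notin_sweep ?mulr0 // => Si; apply: Ji.
  by exists (k%:~R^-1 *: embL R l).
apply: eq_fsbigr => i /set_mem Ji; have ir : i \in r by rewrite rU inE.
have PT y : `|y - v| < rho -> tangent_cone v (dP D i) y <-> dP D i y.
  move=> yv; have vy : `|v - y| < rho by rewrite distrC.
  by have [_ /(_ i ir)[]] := Hrho y vy.
congr (_ * _); apply: (indC_near F k0 PT).
have := HN N (leqnn N) i ir k NK.
rewrite scalerBr addrAC => small; apply: le_lt_trans (ler_normB _ _) _.
by rewrite distrC; lra.
Qed.

End Localization.

Theorem proposition5p5 (R : realType) (F : numFieldType) (n : nat)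
  (I : choiceType) (D : decomposition R F n I)
  (m : int * 'rV[int]_n -> F) (v : 'rV[R]_n) :
  decomposes D m ->
  in_Sv v (Tv D v) /\ agree_near v (Tv D v) m /\
  (forall g, in_Sv v g -> agree_near v g m -> g = Tv D v).
Proof.
move=> HD; have TS := Tv_in_Sv v HD; have TA := Tv_agree_near v HD.
split=> //; split=> // g gS gA.
have gT0 := Sv_vanish (in_Sv_sub gS TS) (agree_near_sub gA TA).
apply/funext => x; apply/eqP; rewrite -subr_eq0; apply/eqP.
exact: (congr1 (fun f => f x) gT0).
Qed.
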